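(* Let $\psi$ be an $n$-dimensional unique sink orientation, run Algorithm 1 on $\psi$ from a starting vertex $v^0$, and let $\rho$ be the iteration in which it terminates. Then $\rho \leq |r_\psi(v^0)|$.
   Context: Let $Q^n = 2^{[n]}$ be the vertex set of the $n$-cube, with $u,v$ adjacent iff $|u\oplus v|=1$; faces are $F_{J,v}=\{u : v\oplus u\subseteq J\}$ for $J\subseteq[n]$. A unique sink orientation (USO) is an orientation of the cube's edges such that every nonempty face has a unique sink (vertex with no outgoing edges within the face). The outmap $s_\psi(v)$ is the set of coordinates $j$ such that the edge $\{v,v\oplus\{j\}\}$ is directed away from $v$. The reachmap is $r_\psi(v)=s_\psi(v)\cup\{j : \exists u \text{ reachable from } v \text{ by a directed path with } j\in s_\psi(u)\}$. Algorithm 1: given a starting vertex $v^0$, set $E^0=\emptyset$ and $j=0$; while $s_\psi(v^j)\neq\emptyset$: pick any $b\in s_\psi(v^j)$, let $v^{j+1}$ be the sink of the face $F_{E^j, v^j\oplus\{b\}}$ (computed by the Fibonacci Seesaw algorithm of Szabó and Welzl), set $E^{j+1}=E^j\cup\{b\}$ and $j\leftarrow j+1$. The algorithm terminates at iteration $\rho$ when $s_\psi(v^\rho)=\emptyset$. *)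

From mathcomp Require Import all_boot.
Set Implicit Arguments. Unset Strict Implicit. Unset Printing Implicit Defensive.

(* Vertices of Q^n: subsets of [n] = 'I_n. *)
Notation vtx n := {set 'I_n}.

Definition symd n (u v : vtx n) : vtx n := (u :\: v) :|: (v :\: u).

(* An orientation of the n-cube: [psi v j] says the edge {v, v (+) {j}}
   is directed away from v.  Consistency: each edge gets exactly one direction. *)
Definition orientation n (psi : vtx n -> 'I_n -> bool) : Prop :=
  forall v j, psi (symd v [set j]) j = ~~ psi v j.

Definition outmap n (psi : vtx n -> 'I_n -> bool) (v : vtx n) : vtx n :=
  [set j | psi v j].

Definition face n (J v : vtx n) : {set vtx n} := [set u | symd v u \subset J].

(* u is a sink of the face F_{J,v}: u in the face and no outgoing edge within it
   (the edges of the face at u are exactly those in the directions of J). *)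
Definition is_sink n (psi : vtx n -> 'I_n -> bool) (J v u : vtx n) : Prop :=
  u \in face J v /\ forall j, j \in J -> ~~ psi u j.

Definition USO n (psi : vtx n -> 'I_n -> bool) : Prop :=
  orientation psi /\ forall J v : vtx n, exists! u, is_sink psi J v u.

Definition dstep n (psi : vtx n -> 'I_n -> bool) : rel (vtx n) :=
  fun u w => [exists j, psi u j && (w == symd u [set j])].

Definition reachmap n (psi : vtx n -> 'I_n -> bool) (v : vtx n) : vtx n :=
  outmap psi v :|:
  [set j | [exists u, connect (dstep psi) v u && (j \in outmap psi u)]].

(* The sink of the
   face (computed by Fibonacci Seesaw) is described as the sink of the face. *)
Definition alg1_run n (psi : vtx n -> 'I_n -> bool) (v0 : vtx n)
    (vs Es : nat -> vtx n) (rho : nat) : Prop :=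
  [/\ vs 0 = v0, Es 0 = set0,
      (forall j, j < rho ->
         outmap psi (vs j) != set0 /\
         exists2 b, b \in outmap psi (vs j) &
           is_sink psi (Es j) (symd (vs j) [set b]) (vs j.+1) /\
           Es j.+1 = Es j :|: [set b])
    & outmap psi (vs rho) = set0].

From mathcomp Require Import all_boot.

Set Implicit Arguments.
Unset Strict Implicit.
Unset Printing Implicit Defensive.

(* By induction on the iterations, v^j is reachable from v^0 and is the sink of
   the face F_{E^j, v^j}.  Hence each chosen direction b leaves v^j, so it lies
   in r(v^0) but not in E^j, and rho = |E^rho| <= |r(v^0)|.  Reachability uses
   that every vertex of a face reaches the sink of that face; the sink property
   is preserved because the sink of F_{E, v(+)b} is also the sink of
   F_{E+b, v}, the latter being either in F_{E, v(+)b} or equal to v, whose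
   b-edge is outgoing. *)

Section Faces.

Context {n : nat}.
Implicit Types (J v u w : vtx n) (j b : 'I_n).

Lemma in_symd u v x : (x \in symd u v) = ((x \in u) != (x \in v)).
Proof. by rewrite /symd !inE; case: (x \in u); case: (x \in v). Qed.

Lemma in_symd1 v j x : (x \in symd v [set j]) = ((x \in v) != (x == j)).
Proof. by rewrite in_symd in_set1. Qed.

Lemma faceP J v u :
  reflect (forall x, x \notin J -> (x \in u) = (x \in v)) (u \in face J v).
Proof.
rewrite inE; apply: (iffP subsetP) => [sub x xJ | agree x].
  by apply/eqP; apply: contraNT xJ => ne; apply: sub; rewrite in_symd eq_sym.
by rewrite in_symd; apply: contraR => xJ; rewrite (agree x xJ) eqxx.
Qed.

Lemma face_refl J v : v \in face J v.
Proof. by apply/faceP. Qed.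

Lemma face_sym J v u : (u \in face J v) = (v \in face J u).
Proof. by apply/faceP/faceP => agree x /agree. Qed.

Lemma face_trans J v u w : u \in face J v -> w \in face J u -> w \in face J v.
Proof. by move=> /faceP uv /faceP wu; apply/faceP => x xJ; rewrite wu ?uv. Qed.

Lemma face0 v u : (u \in face set0 v) = (u == v).
Proof.
apply/faceP/eqP => [agree | -> //]; apply/setP => x.
by rewrite agree ?inE.
Qed.

Lemma face_setD1 J v u j :
  (u \in face (J :\ j) v) = (u \in face J v) && ((j \in u) == (j \in v)).
Proof.
apply/faceP/andP => [agree | [/faceP agree /eqP uj] x].
  by split; [apply/faceP => x xJ; apply: agree; rewrite inE negb_and xJ orbT |
             apply/eqP; apply: agree; rewrite !inE eqxx].
by rewrite !inE negb_and negbK => /orP[/eqP -> // | /agree].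
Qed.

Lemma face_flip J v j : j \in J -> symd v [set j] \in face J v.
Proof.
move=> jJ; apply/faceP => x xJ; rewrite in_symd1.
have /negbTE -> : x != j by apply: contraNneq xJ => ->.
by case: (x \in v).
Qed.

Lemma face_setU1 J v u b : u \in face (J :|: [set b]) v ->
  u \in face J v \/ u \in face J (symd v [set b]).
Proof.
move=> /faceP agree.
have agreeJ x : x \notin J -> x != b -> (x \in u) = (x \in v).
  by move=> xJ xb; apply: agree; rewrite !inE negb_or xJ xb.
have [ub | ub] := eqVneq (b \in u) (b \in v); [left | right];
  apply/faceP => x xJ; rewrite ?in_symd1; have [-> | xb] := eqVneq x b.
- exact: ub.
- exact: agreeJ.
- by move: ub; case: (b \in u); case: (b \in v).
- by rewrite (agreeJ x xJ xb); case: (x \in v).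
Qed.

End Faces.

Section UniqueSinkOrientations.

Variables (n : nat) (psi : vtx n -> 'I_n -> bool).
Hypothesis psi_USO : USO psi.
Implicit Types (J v u s : vtx n) (j b : 'I_n).

Lemma sink_unique J v s t : is_sink psi J v s -> is_sink psi J v t -> s = t.
Proof.
case: psi_USO => _ /(_ J v) [r [_ r_uniq]] sink_s sink_t.
by rewrite -(r_uniq _ sink_s) (r_uniq _ sink_t).
Qed.

Lemma sink_self J v s : is_sink psi J v s -> is_sink psi J s s.
Proof. by case=> _ no_out; split; first exact: face_refl. Qed.

Lemma dstep_flip u j : psi u j -> dstep psi u (symd u [set j]).
Proof. by move=> out; apply/existsP; exists j; rewrite out eqxx. Qed.

Lemma connect_sink J v u s :
  is_sink psi J v s -> u \in face J v -> connect (dstep psi) u s.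
Proof.
move Hk: #|J| => k; elim: k J v u s Hk => [|k IH] J v u s cardJ sink_s uv.
all: have [sv no_out] := sink_s.
  move/eqP: cardJ; rewrite cards_eq0 => /eqP J0.
  by move: sv uv; rewrite J0 !face0 => /eqP -> /eqP ->.
have [j jJ] : {j | j \in J} by apply/sigW/card_gt0P; rewrite cardJ.
have cardJ' : #|J :\ j| = k by move: cardJ; rewrite (cardsD1 j J) jJ => -[].
have sink_s' : is_sink psi (J :\ j) s s.
  by split=> [|i /setD1P[_ iJ]]; [exact: face_refl | exact: no_out].
have reach_s x :
    x \in face J s -> (j \in x) = (j \in s) -> connect (dstep psi) x s.
  move=> xs xj; apply: (IH _ s _ s cardJ' sink_s').
  by rewrite face_setD1 xs xj eqxx.
have [s1 [sink_s1 _]] := proj2 psi_USO (J :\ j) u.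
have u_s1 : connect (dstep psi) u s1.
  exact: (IH _ u u s1 cardJ' sink_s1 (face_refl _ _)).
have us : u \in face J s by apply: face_trans uv; rewrite -face_sym.
have s1s : s1 \in face J s.
  by apply: face_trans us _; case: sink_s1; rewrite face_setD1 => /andP[].
(* The sink s1 of F_{J\j, u} either lies on the same side of j as s, or its
   j-edge is outgoing, since otherwise it would be a second sink of F_{J, v}. *)
apply: connect_trans u_s1 _; have [s1j | s1j] := eqVneq (j \in s1) (j \in s).
  exact: reach_s.
have out_s1 : psi s1 j.
  apply: contraNT s1j => no_out_j; apply/eqP.
  suff -> : s1 = s by [].
  apply: sink_unique _ sink_s; split=> [|i iJ]; first exact: face_trans sv s1s.
  have [-> // | ij] := eqVneq i j.
  by case: sink_s1 => _; apply; rewrite !inE ij.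
apply: connect_trans (connect1 (dstep_flip out_s1)) _; apply: reach_s.
  exact: face_trans s1s (face_flip _ jJ).
by rewrite in_symd1 eqxx; move: s1j; case: (j \in s1); case: (j \in s).
Qed.

Lemma sink_extend E v b s :
  is_sink psi E v v -> psi v b -> is_sink psi E (symd v [set b]) s ->
  is_sink psi (E :|: [set b]) v s.
Proof.
move=> sink_v out_b sink_s.
have [t [sink_t _]] := proj2 psi_USO (E :|: [set b]) v.
have [tv no_out_t] := sink_t.
have sink_tE w : t \in face E w -> is_sink psi E w t.
  by move=> tw; split=> // i iE; apply: no_out_t; rewrite inE iE.
have [/sink_tE tv' | /sink_tE ts] := face_setU1 tv.
  have := no_out_t b; rewrite (sink_unique tv' sink_v) out_b !inE eqxx orbT.
  by move=> /(_ isT).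
by rewrite -(sink_unique ts sink_s).
Qed.

End UniqueSinkOrientations.

Lemma outmap_sub_reachmap n (psi : vtx n -> 'I_n -> bool) v u :
  connect (dstep psi) v u -> outmap psi u \subset reachmap psi v.
Proof.
move=> vu; apply/subsetP => j ju; rewrite !inE; apply/orP; right.
by apply/existsP; exists u; rewrite vu.
Qed.

Section Algorithm1.

Variables (n : nat) (psi : vtx n -> 'I_n -> bool) (v0 : vtx n).
Variables (vs Es : nat -> vtx n) (rho : nat).
Hypotheses (psi_USO : USO psi) (run : alg1_run psi v0 vs Es rho).

Lemma alg1_step j : j < rho ->
  exists2 b, psi (vs j) b &
    is_sink psi (Es j) (symd (vs j) [set b]) (vs j.+1) /\
    Es j.+1 = Es j :|: [set b].
Proof. by case: run => _ _ step _ /step [_ [b]]; rewrite inE; exists b. Qed.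

Lemma alg1_connect j : j <= rho -> connect (dstep psi) v0 (vs j).
Proof.
elim: j => [_ | j IH lt_j]; first by case: run => -> *; exact: connect0.
have [b out_b [sink_next _]] := alg1_step lt_j.
apply: connect_trans (IH (ltnW lt_j)) _.
apply: connect_trans (connect1 (dstep_flip out_b)) _.
exact: connect_sink sink_next (face_refl _ _).
Qed.

Lemma alg1_sink j : j <= rho -> is_sink psi (Es j) (vs j) (vs j).
Proof.
elim: j => [_ | j IH lt_j].
  by case: run => _ -> _ _; split=> [|i]; [exact: face_refl | rewrite inE].
have [b out_b [sink_next ->]] := alg1_step lt_j.
exact: sink_self (sink_extend psi_USO (IH (ltnW lt_j)) out_b sink_next).
Qed.

Lemma alg1_card j : j <= rho -> #|Es j| = j.
Proof.
elim: j => [_ | j IH lt_j]; first by case: run => _ -> _ _; rewrite cards0.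
have [b out_b [_ ->]] := alg1_step lt_j.
have bE : b \notin Es j.
  by apply: contraL out_b; case: (alg1_sink (ltnW lt_j)) => _; apply.
by rewrite setUC cardsU1 bE IH ?(ltnW lt_j).
Qed.

Lemma alg1_directions_sub_reachmap j : j <= rho -> Es j \subset reachmap psi v0.
Proof.
elim: j => [_ | j IH lt_j]; first by case: run => _ -> _ _; exact: sub0set.
have [b out_b [_ ->]] := alg1_step lt_j.
rewrite subUset IH ?(ltnW lt_j) // sub1set.
apply: (subsetP (outmap_sub_reachmap (alg1_connect (ltnW lt_j)))).
by rewrite inE.
Qed.

End Algorithm1.

Theorem lemma18 (n : nat) (psi : {set 'I_n} -> 'I_n -> bool)
    (v0 : {set 'I_n}) (vs Es : nat -> {set 'I_n}) (rho : nat) :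
  USO psi -> alg1_run psi v0 vs Es rho ->
  rho <= #|reachmap psi v0|.
Proof.
move=> psi_USO run; rewrite -{1}(alg1_card psi_USO run (leqnn rho)).
exact/subset_leq_card/(alg1_directions_sub_reachmap psi_USO run).
Qed.
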